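(* Let $f:\mathbb{R}^{n_0}\to\mathbb{R}^{n_m}$ be an $m$-layer ReLU network with weights $\mathbf{W}^{(k)}\in\mathbb{R}^{n_k\times n_{k-1}}$ and biases $\bm{b}^{(k)}\in\mathbb{R}^{n_k}$, $k\in[m]$, let $\bm{x}_0\in\mathbb{R}^{n_0}$, $p\in[1,\infty]$, $\epsilon>0$, and let $\bm{l}^{(k)},\bm{u}^{(k)}\in\mathbb{R}^{n_k}$, $k\in[m-1]$, be lower and upper bounds on the pre-ReLU activations valid on $B_p(\bm{x}_0,\epsilon)$. Let $f^U,f^L:\mathbb{R}^{n_0}\to\mathbb{R}^{n_m}$ be the functions defined below. Then for all $j\in[n_m]$ and all $\bm{x}\in B_p(\bm{x}_0,\epsilon)$, $$f^L_j(\bm{x})\le f_j(\bm{x})\le f^U_j(\bm{x}).$$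
   Context: Network: $\phi_0(\bm{x})=\bm{x}$; for $k\in[m-1]$, $\phi_k(\bm{x})=\sigma(\mathbf{W}^{(k)}\phi_{k-1}(\bm{x})+\bm{b}^{(k)})$ with $\sigma(\bm{y})=\max(\bm{y},\bm{0})$ elementwise; $f(\bm{x})=\mathbf{W}^{(m)}\phi_{m-1}(\bm{x})+\bm{b}^{(m)}$, $f_j$ its $j$-th coordinate. $B_p(\bm{x}_0,\epsilon)=\{\bm{x}:\|\bm{x}-\bm{x}_0\|_p\le\epsilon\}$. Standing assumption: for each $k\in[m-1]$, $r\in[n_k]$, $\bm{l}^{(k)}_r\le\bm{u}^{(k)}_r$ and $\bm{l}^{(k)}_r\le \mathbf{W}^{(k)}_{r,:}\phi_{k-1}(\bm{x})+\bm{b}^{(k)}_r\le\bm{u}^{(k)}_r$ for all $\bm{x}\in B_p(\bm{x}_0,\epsilon)$. Index sets: $\mathcal{I}^+_k=\{r\in[n_k]:\bm{u}^{(k)}_r\ge\bm{l}^{(k)}_r\ge0\}$, $\mathcal{I}^-_k=\{r:\bm{l}^{(k)}_r\le\bm{u}^{(k)}_r\le 0\}$, $\mathcal{I}_k=\{r:\bm{l}^{(k)}_r<0<\bm{u}^{(k)}_r\}$. Let $\mathbf{D}^{(0)}=I_{n_0}$ and for $k\in[m-1]$ let $\mathbf{D}^{(k)}$ be the $n_k\times n_k$ diagonal matrix with $\mathbf{D}^{(k)}_{r,r}=\frac{\bm{u}^{(k)}_r}{\bm{u}^{(k)}_r-\bm{l}^{(k)}_r}$ if $r\in\mathcal{I}_k$,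 $1$ if $r\in\mathcal{I}^+_k$, $0$ if $r\in\mathcal{I}^-_k$. Let $\mathbf{A}^{(m-1)}=\mathbf{W}^{(m)}\mathbf{D}^{(m-1)}\in\mathbb{R}^{n_m\times n_{m-1}}$ and, for $k=m-1,m-2,\dots,1$, $\mathbf{A}^{(k-1)}=\mathbf{A}^{(k)}\mathbf{W}^{(k)}\mathbf{D}^{(k-1)}\in\mathbb{R}^{n_m\times n_{k-1}}$. For $k\in[m-1]$ define $\mathbf{T}^{(k)},\mathbf{H}^{(k)}\in\mathbb{R}^{n_k\times n_m}$ by $\mathbf{T}^{(k)}_{r,j}=\bm{l}^{(k)}_r$ if $r\in\mathcal{I}_k$ and $\mathbf{A}^{(k)}_{j,r}>0$, else $0$; $\mathbf{H}^{(k)}_{r,j}=\bm{l}^{(k)}_r$ if $r\in\mathcal{I}_k$ and $\mathbf{A}^{(k)}_{j,r}<0$, else $0$. Then $f^U_j(\bm{x})=\mathbf{A}^{(0)}_{j,:}\bm{x}+\bm{b}^{(m)}_j+\sum_{k=1}^{m-1}\mathbf{A}^{(k)}_{j,:}(\bm{b}^{(k)}-\mathbf{T}^{(k)}_{:,j})$ and $f^L_j(\bm{x})=\mathbf{A}^{(0)}_{j,:}\bm{x}+\bm{b}^{(m)}_j+\sum_{k=1}^{m-1}\mathbf{A}^{(k)}_{j,:}(\bm{b}^{(k)}-\mathbf{H}^{(k)}_{:,j})$. *)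

From HB Require Import structures.
From mathcomp Require Import all_boot all_order all_algebra.
From mathcomp Require Import reals constructive_ereal ereal exp.
Set Implicit Arguments. Unset Strict Implicit. Unset Printing Implicit Defensive.
Import Order.TTheory GRing.Theory Num.Theory.
Local Open Scope ring_scope.

Section Network.
Variable R : realType.

Definition lpnorm (p : \bar R) (d : nat) (v : 'cV[R]_d) : R :=
  match p with
  | +oo%E => \big[Num.max/0]_(i < d) `|v i 0|
  | (q%:E)%E => (\sum_(i < d) `|v i 0| `^ q) `^ q^-1
  | -oo%E => 0
  end.

Definition relu (d : nat) (y : 'cV[R]_d) : 'cV[R]_d := map_mx (fun t => Num.max t 0) y.

Variable n : nat -> nat.
Variable W : forall k : nat, 'M[R]_(n k, n k.-1).
Variable b : forall k : nat, 'cV[R]_(n k).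

Fixpoint phi (x : 'cV[R]_(n 0%N)) (k : nat) : 'cV[R]_(n k) :=
  match k with
  | 0 => x
  | k'.+1 => relu (W k'.+1 *m phi x k' + b k'.+1)
  end.

Definition preact (x : 'cV[R]_(n 0%N)) (k : nat) : 'cV[R]_(n k) :=
  W k *m phi x k.-1 + b k.

Definition net (m : nat) (x : 'cV[R]_(n 0%N)) : 'cV[R]_(n m) :=
  W m *m phi x m.-1 + b m.

Variables l u : forall k : nat, 'cV[R]_(n k).

(* D^(k)_{r,r} for k >= 1: I_k (l<0<u) -> u/(u-l); I+_k (0<=l) -> 1; otherwise (I-_k) -> 0 *)
Definition dcoef (lr ur : R) : R :=
  if (lr < 0) && (0 < ur) then ur / (ur - lr)
  else if 0 <= lr then 1 else 0.

Definition Dmat (k : nat) : 'M[R]_(n k) :=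
  \matrix_(r, s) (if r == s then (if k == 0%N then 1 else dcoef (l k r 0) (u k r 0)) else 0).

(* generic "identity-shaped" matrix of type 'M_(n i, n k); it is the identity when i = k *)
Definition idg (i k : nat) : 'M[R]_(n i, n k) := \matrix_(r, s) ((nat_of_ord r == nat_of_ord s)%:R).

(* P k i = D^(i) W^(i) D^(i-1) W^(i-1) ... D^(k+1) W^(k+1)  (for i >= k; P k k = I) *)
Fixpoint Pchain (k i : nat) : 'M[R]_(n i, n k) :=
  match i with
  | 0 => idg 0%N k
  | i'.+1 => if (k <= i')%N then Dmat i'.+1 *m W i'.+1 *m Pchain k i' else idg i'.+1 k
  end.

(* A^(k) = W^(m) D^(m-1) W^(m-1) ... W^(k+1) D^(k), i.e. the unrolled recursion
   A^(m-1) = W^(m) D^(m-1),  A^(k-1) = A^(k) W^(k) D^(k-1). *)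
Definition Amat (m k : nat) : 'M[R]_(n m, n k) := W m *m Pchain k m.-1 *m Dmat k.

Definition in_I (k : nat) (r : 'I_(n k)) : bool := (l k r 0 < 0) && (0 < u k r 0).

Definition Tmat (m k : nat) : 'M[R]_(n k, n m) :=
  \matrix_(r, j) (if in_I r && (0 < Amat m k j r) then l k r 0 else 0).

Definition Hmat (m k : nat) : 'M[R]_(n k, n m) :=
  \matrix_(r, j) (if in_I r && (Amat m k j r < 0) then l k r 0 else 0).

Definition fU (m : nat) (j : 'I_(n m)) (x : 'cV[R]_(n 0%N)) : R :=
  (row j (Amat m 0) *m x) 0 0 + b m j 0
  + \sum_(1 <= k < m) (row j (Amat m k) *m (b k - col j (Tmat m k))) 0 0.

Definition fL (m : nat) (j : 'I_(n m)) (x : 'cV[R]_(n 0%N)) : R :=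
  (row j (Amat m 0) *m x) 0 0 + b m j 0
  + \sum_(1 <= k < m) (row j (Amat m k) *m (b k - col j (Hmat m k))) 0 0.

End Network.

From HB Require Import structures.
From mathcomp Require Import all_boot all_order all_algebra.
From mathcomp Require Import reals constructive_ereal ereal exp.
From mathcomp Require Import lra zify.
Set Implicit Arguments.
Unset Strict Implicit.
Unset Printing Implicit Defensive.
Import Order.TTheory GRing.Theory Num.Theory.
Local Open Scope ring_scope.

(* On [l, u] the ReLU equals d y with d = dcoef l u in {0, 1} when l and u have
   the same sign, and lies between the chords d y and d (y - l), d = u / (u - l),
   when l < 0 < u.  So c max(y, 0) <= c d (y - t) with t = l exactly when c d > 0,
   which is the rule defining T (H is the mirror case c d < 0).  With
   c_k = W^(m) D^(m-1) W^(m-1) ... D^(k+1) W^(k+1) we have A^(k) = c_k D^(k) and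
   c_(k-1) = A^(k) W^(k), hence
     c_k phi_k <= A^(k) (W^(k) phi_(k-1) + b^(k) - T^(k)_j)
               = c_(k-1) phi_(k-1) + A^(k) (b^(k) - T^(k)_j),
   and peeling the layers from f_j = c_(m-1) phi_(m-1) + b^(m)_j down to
   c_0 phi_0 = A^(0) x yields f^U_j. *)

Lemma le_first_of_nonincreasing d (T : porderType d) (s : nat -> T) (N : nat) :
  (forall k, (k < N)%N -> (s k.+1 <= s k)%O) -> (s N <= s 0)%O.
Proof.
elim: N => [|N IH] s_dec //.
exact: le_trans (s_dec N (ltnSn N)) (IH (fun k kN => s_dec k (leqW kN))).
Qed.

Section ReluRelaxation.
Variable R : realType.

Lemma relu_eq_dcoef (l u y : R) : ~~ ((l < 0) && (0 < u)) -> l <= y <= u ->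
  Num.max y 0 = dcoef l u * y.
Proof.
move=> stable /andP[ly yu]; rewrite /dcoef (negbTE stable).
have [l0|l0] := leP 0 l; first by rewrite mul1r max_l // (le_trans l0 ly).
have u0 : u <= 0 by move: stable; rewrite l0 /= -leNgt.
by rewrite mul0r max_r // (le_trans yu u0).
Qed.

Lemma relu_triangle_relax (l u y : R) : l < 0 -> 0 < u -> l <= y <= u ->
  [/\ 0 < dcoef l u, dcoef l u * y <= Num.max y 0
    & Num.max y 0 <= dcoef l u * (y - l)].
Proof.
move=> l0 u0 /andP[ly yu]; rewrite /dcoef l0 u0 /=.
set d := u / (u - l).
have d_chord : d * (u - l) = u by rewrite /d mulfVK // subr_eq0 gt_eqF // (lt_trans l0).
have d0 : 0 < d by rewrite divr_gt0 // subr_gt0 (lt_trans l0).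
by have [y0|y0] := leP 0 y; split=> //; nra.
Qed.

Lemma scaled_relu_le (l u y c : R) : l <= y <= u ->
  c * Num.max y 0 <=
  c * dcoef l u * (y - (if (l < 0) && (0 < u) && (0 < c * dcoef l u) then l else 0)).
Proof.
move=> lyu; have [/andP[l0 u0]|stable] := boolP ((l < 0) && (0 < u)); last first.
  by rewrite subr0 (relu_eq_dcoef stable lyu) mulrA.
have [d0 lo up] := relu_triangle_relax l0 u0 lyu.
rewrite /= pmulr_lgt0 // -mulrA.
by have [c0|c0] := ltP 0 c; [rewrite ler_pM2l | rewrite subr0 ler_wnM2l].
Qed.

Lemma scaled_relu_ge (l u y c : R) : l <= y <= u ->
  c * dcoef l u * (y - (if (l < 0) && (0 < u) && (c * dcoef l u < 0) then l else 0))
  <= c * Num.max y 0.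
Proof.
move=> lyu; have := scaled_relu_le (- c) lyu.
by rewrite !mulNr oppr_gt0 lerN2.
Qed.

End ReluRelaxation.

Section Linearization.
Variables (R : realType) (n : nat -> nat).
Variable W : forall k : nat, 'M[R]_(n k, n k.-1).
Variables l u : forall k : nat, 'cV[R]_(n k).

Lemma idg_id i : idg R n i i = 1%:M.
Proof. by apply/matrixP => r s; rewrite !mxE. Qed.

Lemma Dmat0 : Dmat l u 0 = 1%:M.
Proof. by apply/matrixP => r s; rewrite !mxE; case: (r == s). Qed.

Lemma Pchain_id k : Pchain W l u k k = 1%:M.
Proof. by case: k => [|k] /=; rewrite ?ltnn idg_id. Qed.

Lemma Pchain_pred k i : (0 < k)%N -> (k <= i)%N ->
  Pchain W l u k.-1 i = Pchain W l u k i *m Dmat l u k *m W k.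
Proof.
move=> k0; elim: i => [|i IH] ki; first by case: k k0 ki.
rewrite /= (_ : (k.-1 <= i)%N); last by rewrite -ltnS prednK.
case: (ltngtP k i.+1) ki => // [ki|->] _; last first.
  by rewrite ltnn Pchain_id idg_id mulmx1 mul1mx.
by rewrite ltnS in ki; rewrite ki IH // !mulmxA.
Qed.

Lemma mulmx_Dmat_entry k (c : 'rV[R]_(n k)) (r : 'I_(n k)) : (0 < k)%N ->
  (c *m Dmat l u k) 0 r = c 0 r * dcoef (l k r 0) (u k r 0).
Proof.
move=> k0; rewrite mxE (bigD1 r) //= big1 ?addr0; first by rewrite mxE eqxx; case: k k0 c r.
by move=> s /negbTE sr; rewrite mxE sr mulr0.
Qed.

Section RowRelu.
Variables (k : nat) (c : 'rV[R]_(n k)) (y : 'cV[R]_(n k)).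
Hypotheses (k0 : (0 < k)%N) (y_bounded : forall r, l k r 0 <= y r 0 <= u k r 0).

Lemma row_relu_le :
  (c *m relu y) 0 0 <= (c *m Dmat l u k *m
    (y - \col_r (if in_I l u r && (0 < (c *m Dmat l u k) 0 r) then l k r 0 else 0))) 0 0.
Proof.
rewrite [X in X <= _]mxE [X in _ <= X]mxE; apply: ler_sum => r _.
have := mulmx_Dmat_entry c r k0; rewrite mxE => cD_r.
by rewrite !mxE cD_r; apply: scaled_relu_le.
Qed.

Lemma row_relu_ge :
  (c *m Dmat l u k *m
    (y - \col_r (if in_I l u r && ((c *m Dmat l u k) 0 r < 0) then l k r 0 else 0))) 0 0
  <= (c *m relu y) 0 0.
Proof.
rewrite [X in X <= _]mxE [X in _ <= X]mxE; apply: ler_sum => r _.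
have := mulmx_Dmat_entry c r k0; rewrite mxE => cD_r.
by rewrite !mxE cD_r; apply: scaled_relu_ge.
Qed.

End RowRelu.
End Linearization.

Section Unrolling.
Variables (R : realType) (n : nat -> nat).
Variable W : forall k : nat, 'M[R]_(n k, n k.-1).
Variable b : forall k : nat, 'cV[R]_(n k).
Variables l u : forall k : nat, 'cV[R]_(n k).
Variables (m : nat) (j : 'I_(n m)) (x : 'cV[R]_(n 0%N)).
Hypothesis preact_bounded : forall k, (0 < k < m)%N ->
  forall r, l k r 0 <= preact W b x k r 0 <= u k r 0.

Let coef k : 'rV[R]_(n k) := row j (W m *m Pchain W l u k m.-1).

Let bound_tail (O : forall k, 'M[R]_(n k, n m)) (k : nat) : R :=
  (coef k *m phi W b x k) 0 0 + b m j 0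
  + \sum_(k.+1 <= i < m) (row j (Amat W l u m i) *m (b i - col j (O i))) 0 0.

Lemma row_Amat k : row j (Amat W l u m k) = coef k *m Dmat l u k.
Proof. by rewrite /Amat row_mul. Qed.

Lemma coef_pred k : (k.+1 < m)%N -> coef k = row j (Amat W l u m k.+1) *m W k.+1.
Proof.
move=> km; rewrite row_Amat /coef (Pchain_pred W l u (ltn0Sn k)) //; last by lia.
by rewrite !mulmxA !row_mul.
Qed.

Lemma bound_tail_last O : (0 < m)%N -> bound_tail O m.-1 = net W b m x j 0.
Proof.
move=> m0; rewrite /bound_tail /coef Pchain_id mulmx1 prednK // big_geq // addr0.
by rewrite /net -row_mul !mxE.
Qed.

Lemma peel_layer k (v : 'cV[R]_(n k.+1)) : (k.+1 < m)%N ->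
  (coef k *m phi W b x k) 0 0 + (row j (Amat W l u m k.+1) *m (b k.+1 - v)) 0 0
  = (row j (Amat W l u m k.+1) *m (preact W b x k.+1 - v)) 0 0.
Proof.
by move=> km; rewrite coef_pred // /preact -addrA [in RHS]mulmxDr [RHS]mxE mulmxA.
Qed.

Lemma bound_tail_gap O k : (k.+1 < m)%N ->
  bound_tail O k - bound_tail O k.+1 =
  (row j (Amat W l u m k.+1) *m (preact W b x k.+1 - col j (O k.+1))) 0 0
  - (coef k.+1 *m relu (preact W b x k.+1)) 0 0.
Proof. by move=> km; rewrite -peel_layer // /bound_tail (big_ltn km); lra. Qed.

Lemma col_Tmat k : col j (Tmat W l u m k) =
  \col_r (if in_I l u r && (0 < (coef k *m Dmat l u k) 0 r) then l k r 0 else 0).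
Proof. by apply/matrixP => r s; rewrite -row_Amat !mxE. Qed.

Lemma col_Hmat k : col j (Hmat W l u m k) =
  \col_r (if in_I l u r && ((coef k *m Dmat l u k) 0 r < 0) then l k r 0 else 0).
Proof. by apply/matrixP => r s; rewrite -row_Amat !mxE. Qed.

Lemma bound_tail_T_succ k : (k.+1 < m)%N ->
  bound_tail (Tmat W l u m) k.+1 <= bound_tail (Tmat W l u m) k.
Proof.
move=> km; rewrite -subr_ge0 bound_tail_gap // subr_ge0 row_Amat col_Tmat.
by apply: row_relu_le => // r; apply: preact_bounded; rewrite km.
Qed.

Lemma bound_tail_H_succ k : (k.+1 < m)%N ->
  bound_tail (Hmat W l u m) k <= bound_tail (Hmat W l u m) k.+1.
Proof.
move=> km; rewrite -subr_le0 bound_tail_gap // subr_le0 row_Amat col_Hmat.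
by apply: row_relu_ge => // r; apply: preact_bounded; rewrite km.
Qed.

Lemma bound_tail_T0 : bound_tail (Tmat W l u m) 0 = fU W b l u j x.
Proof. by rewrite /fU row_Amat Dmat0 mulmx1. Qed.

Lemma bound_tail_H0 : bound_tail (Hmat W l u m) 0 = fL W b l u j x.
Proof. by rewrite /fL row_Amat Dmat0 mulmx1. Qed.

Lemma net_le_fU : (0 < m)%N -> net W b m x j 0 <= fU W b l u j x.
Proof.
move=> m0; rewrite -(bound_tail_last (Tmat W l u m) m0) -bound_tail_T0.
by apply: le_first_of_nonincreasing => k km; apply: bound_tail_T_succ; lia.
Qed.

Lemma fL_le_net : (0 < m)%N -> fL W b l u j x <= net W b m x j 0.
Proof.
move=> m0; rewrite -(bound_tail_last (Hmat W l u m) m0) -bound_tail_H0 -lerN2.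
apply: (@le_first_of_nonincreasing _ _ (fun k => - bound_tail (Hmat W l u m) k)) => k km.
by rewrite lerN2; apply: bound_tail_H_succ; lia.
Qed.

End Unrolling.

Theorem theorem3p5 (R : realType) (m : nat) (n : nat -> nat)
  (W : forall k : nat, 'M[R]_(n k, n k.-1)) (b : forall k : nat, 'cV[R]_(n k))
  (x0 : 'cV[R]_(n 0%N)) (p : \bar R) (eps : R)
  (l u : forall k : nat, 'cV[R]_(n k)) :
  (0 < m)%N -> (1 <= p)%E -> 0 < eps ->
  (forall k : nat, (0 < k < m)%N -> forall r : 'I_(n k),
     l k r 0 <= u k r 0 /\
     (forall x : 'cV[R]_(n 0%N), lpnorm p (x - x0) <= eps ->
        l k r 0 <= preact W b x k r 0 <= u k r 0)) ->
  forall (j : 'I_(n m)) (x : 'cV[R]_(n 0%N)), lpnorm p (x - x0) <= eps ->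
    fL W b l u j x <= net W b m x j 0 <= fU W b l u j x.
Proof.
move=> m0 _ _ bounds j x x_near.
have preact_bounded k : (0 < k < m)%N -> forall r,
    l k r 0 <= preact W b x k r 0 <= u k r 0.
  by move=> km r; have [_] := bounds k km r; apply.
by rewrite fL_le_net ?net_le_fU.
Qed.
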